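(* Let $G$ be a graph containing no cycle of length 6, let $x\in V(G)$, and let $(a,b,c)$ be a path on three distinct vertices in the induced subgraph $G[N_2(x)]$. Then there exists a vertex $v$ such that $\{v\}=N(x)\cap N(a)=N(x)\cap N(c)$.
   Context: All graphs are finite, simple and undirected; ''containing no cycle of length 6'' means having no subgraph (not necessarily induced) isomorphic to $C_6$. $N_i(S)$ denotes the set of vertices at distance exactly $i$ from the vertex set $S$, $N(S)=N_1(S)$, and $N(v)=N(\{v\})$, $N_2(v)=N_2(\{v\})$. *)

From mathcomp Require Import all_boot.
Set Implicit Arguments. Unset Strict Implicit. Unset Printing Implicit Defensive.

Definition simple_graph (T : finType) (e : rel T) : Prop :=
  symmetric e /\ irreflexive e.

Definition nbhd (T : finType) (e : rel T) (v : T) : {set T} := [set u | e v u].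

Fixpoint ball (T : finType) (e : rel T) (i : nat) (S : {set T}) : {set T} :=
  match i with
  | 0 => S
  | i'.+1 => let B := ball e i' S in B :|: [set u | [exists w in B, e w u]]
  end.

Definition Ndist (T : finType) (e : rel T) (i : nat) (S : {set T}) : {set T} :=
  match i with
  | 0 => S
  | i'.+1 => ball e i S :\: ball e i' S
  end.

(* G contains a (not necessarily induced) subgraph isomorphic to C_6 *)
Definition has_C6 (T : finType) (e : rel T) : Prop :=
  exists f : 'I_6 -> T, injective f /\ forall i : 'I_6, e (f i) (f (ordS i)).

(* Take neighbours u of x and a, and w of x and c (both exist since a, c lie
   at distance 2 from x).  If u <> w, then x u a b c w is a 6-cycle: all six
   vertices are distinct because a, b, c are neither x nor adjacent to it,
   while u and w are.  Hence every common neighbour of x and a equals every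
   common neighbour of x and c, which forces both sets to be one singleton. *)
From mathcomp Require Import all_boot.

Set Implicit Arguments.
Unset Strict Implicit.
Unset Printing Implicit Defensive.

Lemma mem_Ndist2_set1 (T : finType) (e : rel T) (x y : T) :
  (y \in Ndist e 2 [set x]) =
  [&& y != x, ~~ e x y & [exists w, e x w && e w y]].
Proof.
have mem_ball1 z : (z \in ball e 1 [set x]) = (z == x) || e x z.
  rewrite /= !inE; congr (_ || _).
  apply/existsP/idP => [[w /andP [/set1P -> //]] | xz].
  by exists x; rewrite inE eqxx.
rewrite /Ndist inE -/(ball e 1 [set x]) [in X in _ && X]inE mem_ball1 negb_or.
case: (y =P x) => // _; case: (boolP (e x y)) => // nxy; rewrite inE.
apply/existsP/existsP => [[w /andP [] ] | [w /andP [xw wy]]]; last first.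
  by exists w; rewrite mem_ball1 xw orbT.
rewrite mem_ball1 => /orP [/eqP -> xy | xw wy]; first by rewrite xy in nxy.
by exists w; rewrite xw.
Qed.

Lemma has_C6_cycle (T : finType) (e : rel T) (s : seq T) :
  size s = 6 -> uniq s -> cycle e s -> has_C6 e.
Proof.
case: s => [|v0 s] // size_s uniq_s cycle_s.
exists (fun i : 'I_6 => nth v0 (v0 :: s) i); split.
  move=> i j /eqP; rewrite nth_uniq ?size_s // => /eqP; exact: val_inj.
case: s size_s uniq_s cycle_s => [|v1 [|v2 [|v3 [|v4 [|v5 [|]]]]]] //= _ _.
by rewrite !andbT => /and4P [e01 e12 e23 /and3P [e34 e45 e50]] [[|[|[|[|[|[|]]]]]]].
Qed.

Lemma set1_of_cross_eq (T : finType) (A B : {set T}) (u w : T) :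
  u \in A -> w \in B -> {in A & B, forall p q, p = q} ->
  A = [set w] /\ B = [set w].
Proof.
move=> uA wB eqAB; have uw := eqAB _ _ uA wB.
split; apply/setP => y; rewrite inE; apply/idP/eqP => [yA | ->].
- exact: eqAB.
- by rewrite -uw.
- by rewrite -(eqAB _ _ uA yA) uw.
- exact: wB.
Qed.

Section C6Free.

Variables (T : finType) (e : rel T).
Hypotheses (sym_e : symmetric e) (irr_e : irreflexive e) (noC6 : ~ has_C6 e).

Lemma C6_free_common_nbr (x a b c u w : T) :
  a \in Ndist e 2 [set x] -> b \in Ndist e 2 [set x] -> c \in Ndist e 2 [set x] ->
  a != b -> b != c -> a != c -> e a b -> e b c ->
  e x u -> e u a -> e x w -> e w c -> u = w.
Proof.
rewrite !mem_Ndist2_set1 => /and3P [ax nxa _] /and3P [bx nxb _] /and3P [cx nxc _].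
move=> ab bc ac eab ebc xu ua xw wc; apply/eqP/negPn/negP => uw; apply: noC6.
have adj_neq p q : e p q -> p != q by apply: contraTneq => ->; rewrite irr_e.
have nbr_neq p q : e x p -> ~~ e x q -> p != q by move=> xp; apply: contraNneq => <-.
apply: (@has_C6_cycle _ _ [:: x; u; a; b; c; w]) => //=; last first.
  by rewrite eab ebc xu ua sym_e wc sym_e xw.
rewrite !inE !negb_or (adj_neq _ _ xu) (adj_neq _ _ xw) (adj_neq _ _ ua) uw ab ac bc.
rewrite !(eq_sym x) ax bx cx (nbr_neq _ _ xu nxb) (nbr_neq _ _ xu nxc).
by rewrite (eq_sym a) (eq_sym b) (eq_sym c) (nbr_neq _ _ xw nxa) (nbr_neq _ _ xw nxb) adj_neq.
Qed.

End C6Free.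

Theorem lemma2p1 (T : finType) (e : rel T) (x a b c : T) :
  simple_graph e -> ~ has_C6 e ->
  a \in Ndist e 2 [set x] -> b \in Ndist e 2 [set x] -> c \in Ndist e 2 [set x] ->
  a != b -> b != c -> a != c ->
  e a b -> e b c ->
  exists v : T, nbhd e x :&: nbhd e a = [set v] /\ nbhd e x :&: nbhd e c = [set v].
Proof.
move=> [sym_e irr_e] noC6 Ha Hb Hc ab bc ac eab ebc.
have common_nbr y (Hy : y \in Ndist e 2 [set x]) : exists u, u \in nbhd e x :&: nbhd e y.
  move: Hy; rewrite mem_Ndist2_set1 => /and3P [_ _ /existsP [u xu_uy]].
  by exists u; rewrite !inE (sym_e y).
have [u xau] := common_nbr a Ha; have [w xcw] := common_nbr c Hc.
exists w; apply: set1_of_cross_eq xau xcw _ => p q.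
rewrite !inE (sym_e a) (sym_e c) => /andP [xp pa] /andP [xq qc].
exact: (C6_free_common_nbr sym_e irr_e noC6 Ha Hb Hc).
Qed.
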